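(* Let $g:\mathrm{dom}(g)\to\mathbb{R}^s$ be a $C^{m+1}$ function, $\mathrm{dom}(g)\subset\mathbb{R}^u$, and let $\mathrm x_0\in\mathrm{dom}(g)$. Assume there exists $\delta>0$ such that $\{(\mathrm x,g(\mathrm x)):\|\mathrm x-\mathrm x_0\|\le\delta\}\subset J_u(z_0,\mathcal P_m,M)$, where $z_0=(\mathrm x_0,g(\mathrm x_0))$ and $\mathcal P_m=T_{g,m,\mathrm x_0}$. Then there exists a constant $C$ depending only on $m$ and $s$ such that for all $i_1,\dots,i_{m+1}\in\{1,\dots,u\}$, $\left\|\frac{\partial^{m+1}g(\mathrm x_0)}{\partial\mathrm x_{i_1}\cdots\partial\mathrm x_{i_{m+1}}}\right\|\le CM$.
   Context: For $g$ of class $C^{m+1}$, $T_{g,m,p}(h)=\sum_{k=1}^m\frac1{k!}D^kg(p)(h^{[k]})$ with $h^{[k]}=(h,\dots,h)$. For a polynomial $\mathcal P_m:\mathbb{R}^u\to\mathbb{R}^s$ of degree $m$ with $\mathcal P_m(0)=0$, $z_0\in\mathbb{R}^u\times\mathbb{R}^s$, $M>0$: $J_u(z_0,\mathcal P_m,M)=\{z_0+(\mathrm x,\mathrm y+\mathcal P_m(\mathrm x)):\|\mathrm y\|\le M\|\mathrm x\|^{m+1}\}$. Norms Euclidean. *)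

From HB Require Import structures.
From mathcomp Require Import all_boot all_order all_algebra.
From mathcomp Require Import all_classical all_reals all_analysis.
Set Implicit Arguments. Unset Strict Implicit. Unset Printing Implicit Defensive.
Import Order.TTheory GRing.Theory Num.Theory.
Import numFieldNormedType.Exports.
Local Open Scope classical_set_scope.
Local Open Scope ring_scope.

Section Defs.
Variable R : realType.

(* Euclidean norm on R^n (MathComp's matrix norm is the max norm). *)
Definition enorm (n : nat) (v : 'rV[R]_n) : R :=
  Num.sqrt (\sum_(i < n) v ord0 i ^+ 2).

Definition evec (n : nat) (i : 'I_n) : 'rV[R]_n := delta_mx ord0 i.

Variables u s : nat.

Definition partial (i : 'I_u) (f : 'rV[R]_u -> 'rV[R]_s) : 'rV[R]_u -> 'rV[R]_s :=
  fun x => 'D_(evec i) f x.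

Definition iter_partial (ix : seq 'I_u) (f : 'rV[R]_u -> 'rV[R]_s) :
  'rV[R]_u -> 'rV[R]_s := foldr partial f ix.

Definition is_Ck (k : nat) (D : set 'rV[R]_u) (f : 'rV[R]_u -> 'rV[R]_s) : Prop :=
  open D /\
  forall ix : seq 'I_u, (size ix <= k)%N ->
    (forall x, D x -> {for x, continuous (iter_partial ix f)}) /\
    ((size ix < k)%N -> forall x, D x -> forall i : 'I_u,
        derivable (iter_partial ix f) x (evec i)).

(* D^k f(p)(h,...,h), written in coordinates:
   sum_{i1..ik} h_i1 ... h_ik d^k f(p)/dx_i1...dx_ik *)
Definition Dk (f : 'rV[R]_u -> 'rV[R]_s) (k : nat) (p h : 'rV[R]_u) : 'rV[R]_s :=
  \sum_(t : k.-tuple 'I_u)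
     (\prod_(j < k) h ord0 (tnth t j)) *: iter_partial t f p.

Definition Taylor (f : 'rV[R]_u -> 'rV[R]_s) (m : nat) (p : 'rV[R]_u) :
  'rV[R]_u -> 'rV[R]_s :=
  fun h => \sum_(1 <= k < m.+1) (k`!%:R)^-1 *: Dk f k p h.

Definition Ju (m : nat) (z0 : 'rV[R]_u * 'rV[R]_s) (P : 'rV[R]_u -> 'rV[R]_s)
  (M : R) : set ('rV[R]_u * 'rV[R]_s) :=
  [set z | exists (x : 'rV[R]_u) (y : 'rV[R]_s),
     enorm y <= M * enorm x ^+ m.+1 /\ z = (z0.1 + x, z0.2 + (y + P x))].

End Defs.

(** Subtract from g the polynomial Q(x) = g(x0) + P_m(x - x0) of degree at
    most m; the hypothesis says the remainder r = g - Q is bounded by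
    M |x - x0|^(m+1) near x0.  An (m+1)-fold iterated finite difference with
    step h along the coordinate directions i_1, ..., i_(m+1) annihilates Q,
    so applied to g it equals the same difference of r, which is at most
    2^(m+1) M ((m+1) h)^(m+1).  By the mean value theorem, applied once per
    difference, it also equals h^(m+1) times the partial derivative
    d^(m+1) g / dx_i1 ... dx_i(m+1) at some point within (m+1) h of x0.
    Dividing by h^(m+1) and letting h tend to 0 bounds each coordinate of
    that derivative by 2^(m+1) (m+1)^(m+1) M, by continuity. *)

From HB Require Import structures.
From mathcomp Require Import all_boot all_order all_algebra.
From mathcomp Require Import all_classical all_reals all_analysis.
From mathcomp Require Import ring lra.
Import Order.TTheory GRing.Theory Num.Theory.
Import numFieldNormedType.Exports.
Local Open Scope classical_set_scope.
Local Open Scope ring_scope.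
Set Implicit Arguments. Unset Strict Implicit. Unset Printing Implicit Defensive.

Section L1Norm.
Variable R : realType.

(* Dominates the Euclidean norm and is additive along coordinate steps, so
   the distance covered by iterated finite differences is easy to count. *)
Definition l1norm n (w : 'rV[R]_n) : R := \sum_(i < n) `|w ord0 i|.

Lemma sumr_sqr_le_sqr_sumr (I : Type) (r : seq I) (a : I -> R) :
  (forall i, 0 <= a i) -> \sum_(i <- r) a i ^+ 2 <= (\sum_(i <- r) a i) ^+ 2.
Proof.
move=> a0; elim: r => [|x r IH]; first by rewrite !big_nil expr0n.
rewrite !big_cons.
have S0 : 0 <= \sum_(i <- r) a i by apply: sumr_ge0.
have := a0 x; nra.
Qed.

Lemma l1norm_ge0 n (w : 'rV[R]_n) : 0 <= l1norm w.
Proof. exact: sumr_ge0. Qed.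

Lemma l1norm0 n : l1norm (0 : 'rV[R]_n) = 0.
Proof. by rewrite /l1norm big1 // => k _; rewrite mxE normr0. Qed.

Lemma l1normD n (a b : 'rV[R]_n) : l1norm (a + b) <= l1norm a + l1norm b.
Proof.
rewrite /l1norm -big_split /=; apply: ler_sum => i _; rewrite mxE; exact: ler_normD.
Qed.

Lemma l1normZ_evec n (i : 'I_n) (t : R) : l1norm (t *: evec R i) = `|t|.
Proof.
rewrite /l1norm (bigD1 i) //= big1 ?addr0; first by rewrite !mxE !eqxx mulr1.
by move=> j /negbTE ji; rewrite !mxE ji andbF mulr0 normr0.
Qed.

Lemma coord_le_l1norm n (w : 'rV[R]_n) i : `|w ord0 i| <= l1norm w.
Proof. by rewrite /l1norm (bigD1 i) //= lerDl; apply: sumr_ge0. Qed.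

Lemma mxnorm_le_l1norm n (w : 'rV[R]_n) : `|w| <= l1norm w.
Proof.
rewrite {1}/Num.norm /= mx_normrE.
apply: bigmax_le; first exact: l1norm_ge0.
by move=> [a b] _ /=; rewrite (ord1 a); exact: coord_le_l1norm.
Qed.

Lemma enorm_le_l1norm n (w : 'rV[R]_n) : enorm w <= l1norm w.
Proof.
rewrite /enorm -(ger0_norm (l1norm_ge0 w)) -sqrtr_sqr ler_sqrt;
  last by rewrite exprn_ge0 // l1norm_ge0.
apply: le_trans (sumr_sqr_le_sqr_sumr _ _) => //.
by apply: ler_sum => i _; rewrite real_normK // num_real.
Qed.

Lemma coord_le_enorm n (w : 'rV[R]_n) i : `|w ord0 i| <= enorm w.
Proof.
rewrite /enorm -sqrtr_sqr ler_sqrt; last by apply: sumr_ge0 => *; rewrite sqr_ge0.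
by rewrite (bigD1 i) //= lerDl; apply: sumr_ge0 => *; rewrite sqr_ge0.
Qed.

Lemma l1ball_sub_open n (D : set 'rV[R]_n) x0 delta :
  open D -> D x0 -> 0 < delta -> exists2 eps : R, 0 < eps &
    forall x, l1norm (x - x0) < eps -> D x /\ enorm (x - x0) <= delta.
Proof.
move=> Dopen Dx0 delta0.
have [e e0 ballD] : exists2 e : R, 0 < e & ball x0 e `<=` D.
  by apply/nbhs_ballP; apply: open_nbhs_nbhs.
exists (Num.min e delta) => [|x]; first by rewrite lt_min e0 delta0.
rewrite lt_min => /andP[xe xdelta]; split.
  apply: ballD; rewrite -ball_normE /= distrC.
  exact: le_lt_trans (mxnorm_le_l1norm _) xe.
exact/ltW/(le_lt_trans (enorm_le_l1norm _) xdelta).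
Qed.

End L1Norm.

Lemma Ju_remainder_le (R : realType) u s m (x0 x : 'rV[R]_u) (z0 y : 'rV[R]_s)
    (P : 'rV[R]_u -> 'rV[R]_s) M :
  Ju m (x0, z0) P M (x, y) ->
  enorm (y - (z0 + P (x - x0))) <= M * enorm (x - x0) ^+ m.+1.
Proof.
case=> x' [y' [y'_le [-> ->]]] /=.
have -> : x0 + x' - x0 = x' by rewrite addrC addKr.
by rewrite opprD addrACA subrr add0r addrK.
Qed.

Section FiniteDifferences.
Variables (R : realType) (u s : nat).
Local Notation V := 'rV[R]_u.
Local Notation W := 'rV[R]_s.

Definition fdiff (v : V) (F : V -> W) : V -> W := fun x => F (x + v) - F x.

Definition iter_fdiff (h : R) (ix : seq 'I_u) (F : V -> W) : V -> W :=
  foldr (fun i G => fdiff (h *: evec R i) G) F ix.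

(* Degree at most k, in the sense that all (k+1)-fold finite differences
   vanish. *)
Fixpoint fdiff_deg_le (k : nat) (F : V -> W) : Prop :=
  if k is k'.+1 then forall v, fdiff_deg_le k' (fdiff v F)
  else forall x y, F x = F y.

Lemma eq_fdiff_deg_le k F G : F =1 G -> fdiff_deg_le k F -> fdiff_deg_le k G.
Proof. by move=> /funext ->. Qed.

Lemma fdiff_deg_leD k F G :
  fdiff_deg_le k F -> fdiff_deg_le k G -> fdiff_deg_le k (fun x => F x + G x).
Proof.
elim: k F G => [|k IH] F G /= hF hG; first by move=> x y; rewrite (hF x y) (hG x y).
move=> v; apply: eq_fdiff_deg_le (IH _ _ (hF v) (hG v)) => x.
by rewrite /fdiff opprD addrACA.
Qed.

Lemma fdiff_deg_leZ k a F : fdiff_deg_le k F -> fdiff_deg_le k (fun x => a *: F x).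
Proof.
elim: k F => [|k IH] F /= hF; first by move=> x y; rewrite (hF x y).
by move=> v; apply: eq_fdiff_deg_le (IH _ (hF v)) => x; rewrite /fdiff scalerBr.
Qed.

Lemma fdiff_deg_le_cst k c : fdiff_deg_le k (fun _ => c).
Proof.
elim: k c => [|k IH] c //= v.
by apply: eq_fdiff_deg_le (IH 0) => x; rewrite /fdiff subrr.
Qed.

Lemma fdiff_deg_leS k F : fdiff_deg_le k F -> fdiff_deg_le k.+1 F.
Proof.
elim: k F => [|k IH] F /= hF v; last exact: IH.
by apply: eq_fdiff_deg_le (fdiff_deg_le_cst 0 0) => x; rewrite /fdiff (hF (x + v) x) subrr.
Qed.

Lemma fdiff_deg_le_leq k k' F :
  (k <= k')%N -> fdiff_deg_le k F -> fdiff_deg_le k' F.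
Proof.
move=> /subnK <-; elim: (k' - k)%N => [|n IH] // hF.
by rewrite addSn; apply/fdiff_deg_leS/IH.
Qed.

Lemma fdiff_deg_le_shift k w F :
  fdiff_deg_le k F -> fdiff_deg_le k (fun x => F (x + w)).
Proof.
elim: k F => [|k IH] F /= hF; first by move=> x y; rewrite (hF _ (y + w)).
by move=> v; apply: eq_fdiff_deg_le (IH _ (hF v)) => x; rewrite /fdiff addrAC.
Qed.

Lemma fdiff_deg_leM k (L : V -> R) F : {morph L : x y / x + y} ->
  fdiff_deg_le k F -> fdiff_deg_le k.+1 (fun x => L x *: F x).
Proof.
move=> LD; elim: k F => [|k IH] F hF v.
  apply: eq_fdiff_deg_le (fdiff_deg_le_cst 0 (L v *: F v)) => x.
  by rewrite /fdiff LD (hF (x + v) x) (hF v x) scalerDl addrAC subrr add0r.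
apply: eq_fdiff_deg_le (fdiff_deg_leD _ (IH _ (hF v))) => [x|].
  by rewrite /fdiff LD scalerDl scalerBr addrA [X in _ = X - _]addrC.
exact/fdiff_deg_leZ/fdiff_deg_le_shift.
Qed.

Lemma fdiff_deg_le_sum k (I : eqType) (r : seq I) (P : pred I) (F : I -> V -> W) :
  (forall i, i \in r -> P i -> fdiff_deg_le k (F i)) ->
  fdiff_deg_le k (fun x => \sum_(i <- r | P i) F i x).
Proof.
elim: r => [|a r IH] hF.
  by apply: eq_fdiff_deg_le (fdiff_deg_le_cst k 0) => x; rewrite big_nil.
have IH' : fdiff_deg_le k (fun x => \sum_(i <- r | P i) F i x).
  by apply: IH => i ir; apply: hF; rewrite inE ir orbT.
case Pa: (P a).
  apply: eq_fdiff_deg_le (fdiff_deg_leD (hF a (mem_head _ _) Pa) IH') => x.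
  by rewrite big_cons Pa.
by apply: eq_fdiff_deg_le IH' => x; rewrite big_cons Pa.
Qed.

Lemma fdiff_deg_le_monomial k (f : 'I_k -> 'I_u) (c : W) :
  fdiff_deg_le k (fun x : V => (\prod_(j < k) x ord0 (f j)) *: c).
Proof.
elim: k f => [|k IH] f.
  by apply: eq_fdiff_deg_le (fdiff_deg_le_cst 0 c) => x; rewrite big_ord0 scale1r.
have coordD : {morph (fun x : V => x ord0 (f ord0)) : x y / x + y}.
  by move=> x y; rewrite mxE.
apply: eq_fdiff_deg_le (fdiff_deg_leM coordD (IH (fun j => f (lift ord0 j)))) => x.
by rewrite big_ord_recl scalerA.
Qed.

Lemma fdiff_deg_le_Taylor (g : V -> W) m p : fdiff_deg_le m (Taylor g m p).
Proof.
apply: fdiff_deg_le_sum => k; rewrite mem_index_iota => /andP[_ km] _.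
apply/fdiff_deg_leZ/(fdiff_deg_le_leq (km : (k <= m)%N)).
by apply: fdiff_deg_le_sum => t _ _; apply: fdiff_deg_le_monomial.
Qed.

Lemma iter_fdiffD h ix F G x :
  iter_fdiff h ix (fun x => F x + G x) x = iter_fdiff h ix F x + iter_fdiff h ix G x.
Proof. by elim: ix x => [|i ix IH] x //=; rewrite /fdiff !IH opprD addrACA. Qed.

Lemma fdiff_deg_le_iter_fdiff k h ix F : (size ix <= k)%N ->
  fdiff_deg_le k F -> fdiff_deg_le (k - size ix) (iter_fdiff h ix F).
Proof.
elim: ix => [|i ix IH] /= ixk hF; first by rewrite subn0.
have := IH (ltnW ixk) hF.
by rewrite -[(k - size ix)%N](subnSK ixk); apply.
Qed.

Lemma iter_fdiff_eq0 k h ix F x :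
  fdiff_deg_le k F -> size ix = k.+1 -> iter_fdiff h ix F x = 0.
Proof.
case: ix => [|i ix] //= hF [ixk].
have := fdiff_deg_le_iter_fdiff h (eq_leq ixk) hF; rewrite ixk subnn => cst.
by rewrite /fdiff (cst (x + h *: evec R i) x) subrr.
Qed.

Lemma iter_fdiff_coord_le (h : R) ix (F : V -> W) p c B : 0 <= h ->
  (forall w, l1norm w <= h * (size ix)%:R -> `|F (p + w) ord0 c| <= B) ->
  `|iter_fdiff h ix F p ord0 c| <= 2 ^+ size ix * B.
Proof.
move=> h0; elim: ix p => [|i ix IH] p hF /=.
  by rewrite expr0 mul1r; have := hF 0; rewrite addr0 l1norm0 mulr0 lexx; apply.
rewrite /fdiff !mxE exprS -mulrA mulr_natl mulr2n.
apply: le_trans (ler_normB _ _) (lerD _ _).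
  apply: IH => w hw; rewrite -addrA; apply: hF.
  apply: le_trans (l1normD _ _) _; rewrite l1normZ_evec ger0_norm //.
  by rewrite -natr1 mulrDr mulr1 addrC lerD2r.
apply: IH => w hw; apply: hF; apply: le_trans hw _.
by apply: ler_wpM2l => //; rewrite ler_nat.
Qed.

End FiniteDifferences.

Section MeanValue.
Variables (R : realType) (u s : nat).
Local Notation V := 'rV[R]_u.
Local Notation W := 'rV[R]_s.

Lemma shift_translate (F : V -> W) w q :
  (fun x => F (x + w)) \o shift q = F \o shift (q + w).
Proof. by apply: funext => y /=; rewrite addrA. Qed.

Lemma derivable_fdiff (F : V -> W) w q v :
  derivable F (q + w) v -> derivable F q v ->
  derivable (fdiff w F) q v /\ 'D_v (fdiff w F) q = 'D_v F (q + w) - 'D_v F q.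
Proof.
move=> dFw dF.
have dFw' : derivable (fun x => F (x + w)) q v.
  by move: dFw; rewrite /derivable shift_translate.
split; first exact: (derivableB dFw' dF).
by rewrite (deriveB dFw' dF) /derive shift_translate.
Qed.

Lemma is_derive_line_coord (F : V -> W) p (e : V) c t :
  derivable F (p + t *: e) e ->
  is_derive t 1 (fun t => F (p + t *: e) ord0 c) ('D_e F (p + t *: e) ord0 c).
Proof.
move=> dF; set q := p + t *: e.
have E : (fun r : R => r^-1 *: (((fun t => F (p + t *: e) ord0 c) \o shift t) (r *: 1)
            - F (p + t *: e) ord0 c)) =
         (fun A : W => A ord0 c) \o (fun r => r^-1 *: ((F \o shift q) (r *: e) - F q)).
  apply: funext => r /=; rewrite [in RHS]mxE [in RHS]mxE [in RHS]mxE.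
  rewrite /q; congr (_ * (F _ _ _ - _)).
  by rewrite /GRing.scale /= mulr1 scalemxDl addrCA.
have cv : ((fun A : W => A ord0 c) \o
    (fun r => r^-1 *: ((F \o shift q) (r *: e) - F q))) @ 0^' --> 'D_e F q ord0 c.
  by apply: continuous_cvg; [exact: coord_continuous | exact: dF].
apply: DeriveDef; first by rewrite /derivable E; apply: cvgP cv.
by rewrite /derive E; apply: cvg_lim cv.
Qed.

Lemma fdiff_coord_mvt (F : V -> W) (p e : V) (h : R) c : 0 < h ->
  (forall t, 0 <= t <= h -> derivable F (p + t *: e) e) ->
  exists2 t, 0 < t < h & fdiff (h *: e) F p ord0 c = h * 'D_e F (p + t *: e) ord0 c.
Proof.
move=> h0 dF; set phi := fun t => F (p + t *: e) ord0 c.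
have phi' t : 0 <= t <= h -> is_derive t 1 phi ('D_e F (p + t *: e) ord0 c).
  by move=> /dF; apply: is_derive_line_coord.
have [t t_in ht] : exists2 t, t \in `]0, h[%R &
    phi h - phi 0 = 'D_e F (p + t *: e) ord0 c * (h - 0).
  apply: MVT => // [x|].
    by rewrite in_itv /= => /andP[x0 xh]; apply: phi'; rewrite !ltW.
  apply: derivable_within_continuous => x; rewrite in_itv /= => hx.
  by have [] := phi' x hx.
exists t; first by move: t_in; rewrite in_itv.
rewrite subr0 mulrC in ht.
by rewrite -ht /phi /fdiff scale0r addr0 !mxE.
Qed.

Lemma derive_iter_fdiff (h : R) ix (F : V -> W) i q : 0 <= h ->
  (forall w, l1norm w <= h * (size ix)%:R -> derivable F (q + w) (evec R i)) ->
  derivable (iter_fdiff h ix F) q (evec R i) /\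
  'D_(evec R i) (iter_fdiff h ix F) q = iter_fdiff h ix (partial i F) q.
Proof.
move=> h0; elim: ix q => [|j ix IH] q dF /=.
  by have := dF 0; rewrite addr0 l1norm0 mulr0 lexx => /(_ isT).
set v := h *: evec R j.
have [d1 e1] : derivable (iter_fdiff h ix F) (q + v) (evec R i) /\
  'D_(evec R i) (iter_fdiff h ix F) (q + v) = iter_fdiff h ix (partial i F) (q + v).
  apply: IH => w hw; rewrite -addrA; apply: dF.
  apply: le_trans (l1normD _ _) _; rewrite l1normZ_evec ger0_norm //.
  by rewrite -natr1 mulrDr mulr1 addrC lerD2r.
have hle : h * (size ix)%:R <= h * (size (j :: ix))%:R.
  by rewrite ler_wpM2l // ler_nat /=.
have [d2 e2] := IH q (fun w hw => dF w (le_trans hw hle)).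
have [d3 e3] := derivable_fdiff d1 d2.
by split => //; rewrite e3 e1 e2.
Qed.

Lemma iter_fdiff_mvt (g : V -> W) (x0 : V) (eps : R) (N : nat) (h : R) :
  (forall jx : seq 'I_u, (size jx < N)%N -> forall x, l1norm (x - x0) < eps ->
     forall i, derivable (iter_partial jx g) x (evec R i)) ->
  0 < h ->
  forall ix jx p c, (size ix + size jx <= N)%N ->
  l1norm (p - x0) + h * (size ix)%:R < eps ->
  exists xi, l1norm (xi - p) <= h * (size ix)%:R /\
    iter_fdiff h ix (iter_partial jx g) p ord0 c =
    h ^+ size ix * iter_partial (rev ix ++ jx) g xi ord0 c.
Proof.
move=> dg h0; elim=> [|i ix IH] jx p c ixjxN near_p.
  by exists p; rewrite subrr l1norm0 mulr0 expr0 mul1r.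
have hS : h * (size (i :: ix))%:R = h * (size ix)%:R + h.
  by rewrite -natr1 mulrDr mulr1.
rewrite hS in near_p *; set e := evec R i.
have near_segment t : 0 <= t <= h -> l1norm (p + t *: e - x0) + h * (size ix)%:R < eps.
  move=> /andP[t0 th]; apply: le_lt_trans near_p.
  rewrite addrAC; apply: le_trans (lerD (l1normD _ _) (lexx _)) _.
  by rewrite l1normZ_evec ger0_norm // -addrA lerD2l addrC lerD2l.
have dF t : 0 <= t <= h ->
    derivable (iter_fdiff h ix (iter_partial jx g)) (p + t *: e) e /\
    'D_e (iter_fdiff h ix (iter_partial jx g)) (p + t *: e) =
      iter_fdiff h ix (iter_partial (i :: jx) g) (p + t *: e).
  move=> th; apply: derive_iter_fdiff => [|w hw]; first exact: ltW.
  apply: dg; first by apply: leq_trans ixjxN; rewrite /= addSn ltnS leq_addl.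
  rewrite addrAC; apply: le_lt_trans (l1normD _ _) _.
  by apply: le_lt_trans (near_segment t th); rewrite lerD2l.
have [t /andP[t0 th] ->] : exists2 t, 0 < t < h &
    iter_fdiff h (i :: ix) (iter_partial jx g) p ord0 c =
    h * 'D_e (iter_fdiff h ix (iter_partial jx g)) (p + t *: e) ord0 c.
  by apply: fdiff_coord_mvt => // t th; have [] := dF t th.
have t_in : 0 <= t <= h by rewrite !ltW.
rewrite (dF t t_in).2.
have ixjxN' : (size ix + size (i :: jx) <= N)%N by rewrite addnS -addSn.
have [xi [xi_near ->]] := IH (i :: jx) (p + t *: e) c ixjxN' (near_segment t t_in).
exists xi; split; last by rewrite mulrA -exprS rev_cons cat_rcons.
have -> : xi - p = xi - (p + t *: e) + t *: e by rewrite opprD addrA subrK.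
apply: le_trans (l1normD _ _) _.
rewrite l1normZ_evec ger0_norm; last exact: ltW.
by apply: lerD => //; apply: ltW.
Qed.

End MeanValue.

Section IteratedPartialBound.
Variables (R : realType) (u s m : nat).
Local Notation V := 'rV[R]_u.
Local Notation W := 'rV[R]_s.
Variables (g Q : V -> W) (x0 : V) (eps M : R).
Hypothesis M_ge0 : 0 <= M.
Hypothesis deg_Q : fdiff_deg_le m Q.
Hypothesis remainder_le : forall x, l1norm (x - x0) < eps ->
  enorm (g x - Q x) <= M * l1norm (x - x0) ^+ m.+1.
Hypothesis derivable_g : forall jx : seq 'I_u, (size jx < m.+1)%N ->
  forall x, l1norm (x - x0) < eps -> forall i, derivable (iter_partial jx g) x (evec R i).
Variables (ix : seq 'I_u) (c : 'I_s).
Hypothesis size_ix : size ix = m.+1.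

Lemma iter_fdiff_remainder h :
  iter_fdiff h (rev ix) g x0 = iter_fdiff h (rev ix) (fun x => g x - Q x) x0.
Proof.
have gE : g = (fun x => (g x - Q x) + Q x) by apply: funext => x; rewrite subrK.
by rewrite [in LHS]gE iter_fdiffD (iter_fdiff_eq0 _ _ deg_Q) ?size_rev // addr0.
Qed.

Lemma iter_partial_coord_le_near h : 0 < h -> h * m.+1%:R < eps ->
  exists xi, l1norm (xi - x0) <= h * m.+1%:R /\
    `|iter_partial ix g xi ord0 c| <= 2 ^+ m.+1 * m.+1%:R ^+ m.+1 * M.
Proof.
move=> h0 hm.
have ixN : (size (rev ix) + size ([::] : seq 'I_u) <= m.+1)%N.
  by rewrite size_rev size_ix addn0.
have near_x0 : l1norm (x0 - x0) + h * (size (rev ix))%:R < eps.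
  by rewrite subrr l1norm0 add0r size_rev size_ix.
have [xi []] := iter_fdiff_mvt derivable_g h0 c ixN near_x0.
rewrite cats0 revK size_rev size_ix iter_fdiff_remainder => xi_near exi.
exists xi; split => //.
have hn0 : 0 < h ^+ m.+1 := exprn_gt0 _ h0.
rewrite -(ler_pM2l hn0) -{1}(ger0_norm (ltW hn0)) -normrM -exi.
apply: le_trans (iter_fdiff_coord_le (B := M * (h * m.+1%:R) ^+ m.+1) (ltW h0) _) _.
  move=> w; rewrite size_rev size_ix => w_le.
  have near_w : l1norm (x0 + w - x0) < eps by rewrite addrC addKr; exact: le_lt_trans hm.
  apply: le_trans (coord_le_enorm _ _) _; apply: le_trans (remainder_le near_w) _.
  rewrite addrC addKr ler_wpM2l // lerXn2r ?nnegrE ?l1norm_ge0 //.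
  by rewrite mulr_ge0 // ltW.
rewrite size_rev size_ix.
suff -> : 2 ^+ m.+1 * (M * (h * m.+1%:R) ^+ m.+1) =
  h ^+ m.+1 * (2 ^+ m.+1 * m.+1%:R ^+ m.+1 * M) by [].
by rewrite exprMn; ring.
Qed.

Lemma iter_partial_coord_le : 0 < eps -> {for x0, continuous (iter_partial ix g)} ->
  `|iter_partial ix g x0 ord0 c| <= 2 ^+ m.+1 * m.+1%:R ^+ m.+1 * M.
Proof.
move=> eps0 G_cont; set G := iter_partial ix g.
have cG : ((fun A : W => A ord0 c) \o G) @ x0 --> G x0 ord0 c.
  exact: (@continuous_cvg _ _ _ (nbhs x0) _ G (fun A : W => A ord0 c) (G x0)
    (@coord_continuous R 1 s ord0 c (G x0)) G_cont).
apply/ler_addgt0Pr => eta eta0.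
move: cG => /cvgrPdist_lt /(_ eta eta0) /nbhs_ballP [rho rho0 near_G].
set r := Num.min eps rho.
have r0 : 0 < r by rewrite lt_min eps0 rho0.
have n0 : 0 < m.+1%:R :> R by rewrite ltr0n.
set h := r / 2 / m.+1%:R.
have h0 : 0 < h by rewrite !divr_gt0.
have hn : h * m.+1%:R < eps /\ h * m.+1%:R < rho.
  rewrite divfK ?gt_eqF //.
  have r_eps : r <= eps by rewrite ge_min lexx.
  have r_rho : r <= rho by rewrite ge_min lexx orbT.
  by split; lra.
have [xi [xi_near G_xi]] := iter_partial_coord_le_near h0 hn.1.
have xi_ball : ball x0 rho xi.
  rewrite -ball_normE /= distrC.
  exact: le_lt_trans (mxnorm_le_l1norm _) (le_lt_trans xi_near hn.2).
rewrite -[G x0 _ _](subrK (G xi ord0 c)); apply: le_trans (ler_normD _ _) _.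
by rewrite addrC lerD // ltW //; apply: near_G.
Qed.

End IteratedPartialBound.

Theorem lemma4p2 (R : realType) (m s : nat) :
  exists C : R,
  forall (u : nat) (D : set 'rV[R]_u) (g : 'rV[R]_u -> 'rV[R]_s)
         (x0 : 'rV[R]_u) (M delta : R),
    is_Ck m.+1 D g -> D x0 -> 0 < M -> 0 < delta ->
    (forall x : 'rV[R]_u, D x -> enorm (x - x0) <= delta ->
       Ju m (x0, g x0) (Taylor g m x0) M (x, g x)) ->
    forall ix : seq 'I_u, size ix = m.+1 ->
      enorm (iter_partial ix g x0) <= C * M.
Proof.
exists (s%:R * (2 ^+ m.+1 * m.+1%:R ^+ m.+1)).
move=> u D g x0 M delta [D_open g_Ck] Dx0 M0 delta0 graph_in_J ix size_ix.
have [eps eps0 near_x0] := l1ball_sub_open D_open Dx0 delta0.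
set Q := fun x => g x0 + Taylor g m x0 (x - x0).
have deg_Q : fdiff_deg_le m Q.
  exact/fdiff_deg_leD/fdiff_deg_le_shift/fdiff_deg_le_Taylor/fdiff_deg_le_cst.
have remainder_le x : l1norm (x - x0) < eps ->
    enorm (g x - Q x) <= M * l1norm (x - x0) ^+ m.+1.
  move=> /near_x0[Dx x_near]; apply: le_trans (Ju_remainder_le (graph_in_J x Dx x_near)) _.
  apply: ler_wpM2l; first exact: ltW.
  apply: lerXn2r; rewrite ?nnegrE ?l1norm_ge0 ?sqrtr_ge0 //; exact: enorm_le_l1norm.
have derivable_g jx : (size jx < m.+1)%N -> forall x, l1norm (x - x0) < eps ->
    forall i, derivable (iter_partial jx g) x (evec R i).
  by move=> jx_small x /near_x0[Dx _]; apply: (g_Ck jx (ltnW jx_small)).2.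
have G_cont : {for x0, continuous (iter_partial ix g)}.
  by apply: (g_Ck ix _).1 Dx0; rewrite size_ix.
have coord_le c := iter_partial_coord_le (ltW M0) deg_Q remainder_le derivable_g c
  size_ix eps0 G_cont.
apply: le_trans (enorm_le_l1norm _) _.
apply: le_trans (ler_sum _ (fun c _ => coord_le c)) _.
by rewrite sumr_const card_ord -[leRHS]mulrA [leRHS]mulr_natl.
Qed.
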